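(* Fix a constant arity $k\in\mathbb{N}_+$. There is a constant $C>0$ (depending only on $k$) such that for every $\varepsilon>0$ there exists an $(\varepsilon,0)$-differentially private algorithm that, on every Max-CSP instance $\Phi$ (with constraints of arity at most $k$), outputs a (random) assignment $x\in\{\pm1\}^n$ with $$\mathbb{E}[\mathrm{val}_\Phi(x)]\ \ge\ \left(1-\frac{C}{\varepsilon}\right)\mathrm{OPT}(\Phi),$$ where $\mathrm{OPT}(\Phi)$ is the maximum number of constraints of $\Phi$ satisfiable by a single assignment.
   Context: A Max-CSP instance $\Phi$ on $n$ Boolean variables $x_1,\dots,x_n\in\{\pm1\}$ is a multiset of $m$ constraints $(P_i,S_i)$, where $S_i$ is an ordered list of at most $k$ indices from $[n]$ (the scope) and $P_i:\{\pm1\}^{|S_i|}\to\{0,1\}$ is a predicate; the constraint is satisfied by $x$ if $P_i(x_{S_i})=1$, and $\mathrm{val}_\Phi(x)$ is the number of satisfied constraints. The number of variables $n$ is public. Two instances are neighboring if one is obtained from the other by adding or removing a single constraint. A randomized algorithm $\mathcal{M}$ is $(\varepsilon,\delta)$-differentially private if for all neighboring $\Phi,\Phi'$ and all measurable sets $T$ of outputs, $\Pr[\mathcal{M}(\Phi)\in T]\le e^{\varepsilon}\Pr[\mathcal{M}(\Phi')\in T]+\delta$. *)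

From HB Require Import structures.
From mathcomp Require Import all_boot all_order all_algebra.
From mathcomp Require Import finmap multiset.
From mathcomp Require Import reals. From mathcomp Require Import sequences exp.
Set Implicit Arguments. Unset Strict Implicit. Unset Printing Implicit Defensive.
Import Order.TTheory GRing.Theory Num.Theory.
Local Open Scope ring_scope.

(* Boolean variables in {±1} are encoded as bool (true = +1, false = -1).   *)
Definition assignment (n : nat) := {ffun 'I_n -> bool}.

Definition constraint (n : nat) :=
  {S : seq 'I_n & {ffun (size S).-tuple bool -> bool}}.

Definition scope n (c : constraint n) : seq 'I_n := tag c.
Definition arity n (c : constraint n) : nat := size (scope c).

Definition restrict n (x : assignment n) (S : seq 'I_n) : (size S).-tuple bool :=
  @Tuple (size S) bool (map x S) (introT eqP (size_map x S)).

Definition satisfies n (c : constraint n) (x : assignment n) : bool :=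
  tagged c (restrict x (tag c)).

Definition instance (n : nat) := ({mset constraint n})%mset.

Definition arity_le (k : nat) n (Phi : instance n) : Prop :=
  forall c, c \in Phi -> (arity c <= k)%N.

Definition val n (Phi : instance n) (x : assignment n) : nat :=
  count (fun c => satisfies c x) (enum_mset Phi).

Definition OPT n (Phi : instance n) : nat := \max_(x : assignment n) val Phi x.

Definition neighboring n (Phi Phi' : instance n) : Prop :=
  exists c : constraint n,
    Phi' = (c +` Phi)%mset \/ Phi = (c +` Phi')%mset.

(* A randomized algorithm with output in the finite set of assignments is   *)
(* given by its output distribution on each instance.                       *)
Definition is_distribution (R : realType) (T : finType) (p : {ffun T -> R}) : Prop :=
  (forall t, 0 <= p t) /\ \sum_(t : T) p t = 1.

Definition prob (R : realType) (T : finType) (p : {ffun T -> R}) (A : {set T}) : R :=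
  \sum_(t in A) p t.

Definition differentially_private (R : realType) (k n : nat) (eps delta : R)
    (M : instance n -> {ffun assignment n -> R}) : Prop :=
  forall Phi Phi' : instance n, arity_le k Phi -> arity_le k Phi' ->
    neighboring Phi Phi' ->
    forall T : {set assignment n},
      prob (M Phi) T <= expR eps * prob (M Phi') T + delta.

Definition expected_val (R : realType) n (Phi : instance n)
    (p : {ffun assignment n -> R}) : R :=
  \sum_(x : assignment n) p x * (val Phi x)%:R.

(* The algorithm is the exponential mechanism: sample x with probability
   proportional to exp(eps * val_Phi(x)).  Adding a constraint raises every
   score by 0 or 1, so every weight and the partition function grow by a
   factor in [1, e^eps], which gives eps-differential privacy.  For utility,
   let x* be optimal and S the union of the scopes of the constraints x*
   satisfies, so |S| <= k OPT.  Every assignment agreeing with x* on S is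
   optimal, and these form a 2^-|S| fraction of all assignments; hence
   E[exp(eps (OPT - val))] <= 2^|S|, and Jensen's inequality for exp yields
   eps (OPT - E[val]) <= |S| <= k OPT, i.e. C = k works. *)

From Pilot Require Import Defs.
From HB Require Import structures.
From mathcomp Require Import all_boot all_order all_algebra.
From mathcomp Require Import finmap multiset.
From mathcomp Require Import reals. From mathcomp Require Import sequences exp.
From mathcomp Require Import ring lra.
Set Implicit Arguments.
Unset Strict Implicit.
Unset Printing Implicit Defensive.
Import Order.TTheory GRing.Theory Num.Theory.
Local Open Scope ring_scope.

Section Gibbs.
Variables (R : realType) (T : finType) (eps : R).
Implicit Types (u : T -> R) (p : {ffun T -> R}).

Definition partition_function u : R := \sum_y expR (eps * u y).

Definition gibbs u : {ffun T -> R} :=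
  [ffun x => expR (eps * u x) / partition_function u].

Lemma partition_function_gt0 (x0 : T) u : 0 < partition_function u.
Proof.
rewrite /partition_function (bigD1 x0) //= ltr_pwDl ?expR_gt0 //.
by apply: sumr_ge0 => y _; apply: expR_ge0.
Qed.

Lemma gibbs_distribution (x0 : T) u : is_distribution (gibbs u).
Proof.
have Z_gt0 := partition_function_gt0 x0 u.
split=> [x|]; first by rewrite ffunE divr_ge0 ?expR_ge0 ?ltW.
under eq_bigr do rewrite ffunE.
by rewrite -mulr_suml divff ?gt_eqF.
Qed.

Lemma expR_expectation_le p (y : T -> R) :
  is_distribution p -> expR (\sum_x p x * y x) <= \sum_x p x * expR (y x).
Proof.
move=> [p_ge0 p_sum1]; set m := \sum_x p x * y x.
have tangent x : expR m * (1 + (y x - m)) <= expR (y x).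
  by rewrite -[y x in X in _ <= X](subrKC m) expRD ler_wpM2l ?expR_ge0 ?expR_ge1Dx.
suff <- : \sum_x p x * (expR m * (1 + (y x - m))) = expR m.
  by apply: ler_sum => x _; rewrite ler_wpM2l.
transitivity (\sum_x (expR m * p x + expR m * (p x * y x) - expR m * m * p x)).
  by apply: eq_bigr => x _; ring.
rewrite sumrB big_split /= -!mulr_sumr p_sum1 -/m; ring.
Qed.

Hypothesis eps_ge0 : 0 <= eps.

Section Privacy.
Variables (x0 : T) (u u' : T -> R).
Hypothesis u_le_u' : forall x, u x <= u' x.
Hypothesis u'_le_u1 : forall x, u' x <= u x + 1.

Let gibbs_weight_le x : expR (eps * u x) <= expR (eps * u' x).
Proof. by rewrite ler_expR ler_wpM2l. Qed.

Let gibbs_weight_raised_le x : expR (eps * u' x) <= expR eps * expR (eps * u x).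
Proof.
by rewrite -expRD ler_expR -[eps in eps + _]mulr1 -mulrDr ler_wpM2l // addrC.
Qed.

Lemma gibbs_raised_le x : gibbs u' x <= expR eps * gibbs u x.
Proof.
have Z_gt0 := partition_function_gt0 x0 u.
have Z_le : partition_function u <= partition_function u'.
  by apply: ler_sum => y _; apply: gibbs_weight_le.
have Z'_gt0 := partition_function_gt0 x0 u'.
rewrite !ffunE mulrA; apply: (@le_trans _ _ (expR (eps * u' x) / partition_function u)).
  by rewrite ler_pM2l ?expR_gt0 // lef_pV2 ?posrE.
by rewrite ler_pM2r ?invr_gt0.
Qed.

Lemma gibbs_le_raised x : gibbs u x <= expR eps * gibbs u' x.
Proof.
have Z_gt0 := partition_function_gt0 x0 u.
have Z'_gt0 := partition_function_gt0 x0 u'.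
have Z'_le : partition_function u' <= expR eps * partition_function u.
  rewrite /partition_function mulr_sumr.
  by apply: ler_sum => y _; apply: gibbs_weight_raised_le.
rewrite !ffunE; apply: (@le_trans _ _ (expR (eps * u' x) / partition_function u)).
  by rewrite ler_pM2r ?invr_gt0.
rewrite mulrCA ler_pM2l ?expR_gt0 //.
by rewrite ler_pdivlMr // mulrC ler_pdivrMr.
Qed.
End Privacy.

Lemma gibbs_expected_gap u (A : {set T}) (M : R) (a : T) :
    a \in A -> (forall y, y \in A -> M <= u y) ->
  expR (eps * (M - \sum_x gibbs u x * u x)) <= #|T|%:R / #|A|%:R.
Proof.
move=> aA M_le_u.
set Z := partition_function u.
have Z_gt0 : 0 < Z := partition_function_gt0 a u.
have A_gt0 : (0 : R) < #|A|%:R by rewrite ltr0n; apply/card_gt0P; exists a.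
have Z_ge : #|A|%:R * expR (eps * M) <= Z.
  rewrite /Z /partition_function (bigID [in A]) /= ler_wpDr ?sumr_ge0 //.
    by move=> y _; apply: expR_ge0.
  rewrite mulr_natl -sumr_const; apply: ler_sum => y /M_le_u yA.
  by rewrite ler_expR ler_wpM2l.
have [p_ge0 p_sum1] := gibbs_distribution a u.
have -> : eps * (M - \sum_x gibbs u x * u x) = \sum_x gibbs u x * (eps * (M - u x)).
  transitivity (\sum_x (eps * M * gibbs u x - eps * (gibbs u x * u x))).
    by rewrite sumrB -!mulr_sumr p_sum1; ring.
  by apply: eq_bigr => x _; ring.
have := expR_expectation_le (fun x => eps * (M - u x)) (gibbs_distribution a u).
move/le_trans; apply.
have -> : \sum_x gibbs u x * expR (eps * (M - u x)) = #|T|%:R * expR (eps * M) / Z.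
  transitivity (\sum_(x : T) expR (eps * M) / Z).
    by apply: eq_bigr => x _; rewrite ffunE mulrAC -expRD; congr (expR _ / _); ring.
  by rewrite sumr_const -[LHS]mulr_natl mulrA.
rewrite ler_pdivrMr //; apply: le_trans _ (ler_wpM2l _ Z_ge).
  by rewrite mulrA divfK ?gt_eqF.
exact: divr_ge0.
Qed.
End Gibbs.

Lemma natr_exp2_le_expR (R : realType) (m : nat) : (2 ^ m)%:R <= expR m%:R :> R.
Proof.
rewrite natrX -[m%:R]mulr1 expRM_natl lerXn2r ?nnegrE ?expR_ge0 //.
by rewrite -[2%:R]/(1 + 1 : R) expR_ge1Dx.
Qed.

Definition agree_on (I B : finType) (S : {set I}) (x : {ffun I -> B}) :
  {set {ffun I -> B}} := [set y : {ffun I -> B} | [forall i in S, y i == x i]].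

Lemma card_ffun_le_agree_on (I B : finType) (S : {set I}) (x : {ffun I -> B}) :
  (#|{ffun I -> B}| <= #|B| ^ #|S| * #|agree_on S x|)%N.
Proof.
pose on_S (y : {ffun I -> B}) : {ffun {i : I | i \in S} -> B} := [ffun i => y (sval i)].
pose off_S (y : {ffun I -> B}) := [ffun i => if i \in S then x i else y i].
have split_inj : injective (fun y => (on_S y, off_S y)).
  move=> y z [/ffunP eq_on /ffunP eq_off]; apply/ffunP => i.
  case iS: (i \in S); first by have := eq_on (exist _ i iS); rewrite !ffunE.
  by have := eq_off i; rewrite !ffunE iS.
have image_sub : [set (on_S y, off_S y) | y in {ffun I -> B}]
                   \subset setX setT (agree_on S x).
  apply/subsetP => _ /imsetP[y _ ->]; rewrite !inE /=.
  by apply/forallP => i; apply/implyP => iS; rewrite ffunE iS.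
have := subset_leq_card image_sub.
by rewrite card_imset // cardsX cardsT !card_ffun card_sig.
Qed.

Lemma card_bigcup_seq_le (I : Type) (T : finType) (r : seq I) (P : pred I)
    (F : I -> {set T}) :
  (#|\bigcup_(i <- r | P i) F i| <= \sum_(i <- r | P i) #|F i|)%N.
Proof.
apply: (big_ind2 (fun (A : {set T}) m => #|A| <= m)%N) => [|A m B m' leA leB|//].
  by rewrite cards0.
exact: leq_trans (leq_card_setU A B) (leq_add leA leB).
Qed.

Lemma val_msetD1 n (c : constraint n) (Phi : instance n) (x : assignment n) :
  Defs.val (c +` Phi)%mset x = (satisfies c x + Defs.val Phi x)%N.
Proof.
have perm_cons : perm_eq (enum_mset (c +` Phi)%mset) (c :: enum_mset Phi).
  apply/allP => a _ /=; apply/eqP.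
  by rewrite count_mem_mset mset1DE count_mem_mset eq_sym.
by rewrite /Defs.val (permP perm_cons).
Qed.

Lemma satisfies_agree_on n (c : constraint n) (S : {set 'I_n}) (x y : assignment n) :
  {subset scope c <= S} -> y \in agree_on S x -> satisfies c y = satisfies c x.
Proof.
move=> cS; rewrite inE => /forallP agree; rewrite /satisfies; congr (tagged c _).
by apply: val_inj => /=; apply/eq_in_map => i /cS iS; apply/eqP/(implyP (agree i)).
Qed.

Definition sat_scopes n (Phi : instance n) (x : assignment n) : {set 'I_n} :=
  \bigcup_(c <- enum_mset Phi | satisfies c x) [set i in scope c].

Lemma card_sat_scopes k n (Phi : instance n) (x : assignment n) :
  arity_le k Phi -> (#|sat_scopes Phi x| <= k * Defs.val Phi x)%N.
Proof.
move=> arity_Phi; apply: leq_trans (card_bigcup_seq_le _ _ _) _.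
rewrite /Defs.val -sum1_count big_distrr big_seq_cond [leqRHS]big_seq_cond /=.
apply: leq_sum => c /andP[cPhi _]; rewrite muln1 cardsE.
exact: leq_trans (card_size _) (arity_Phi c cPhi).
Qed.

Lemma val_le_agree_on_sat_scopes n (Phi : instance n) (x y : assignment n) :
  y \in agree_on (sat_scopes Phi x) x -> (Defs.val Phi x <= Defs.val Phi y)%N.
Proof.
move=> yA; rewrite /Defs.val.
rewrite -(@eq_in_count _
  (predI (fun c => satisfies c y) (fun c => satisfies c x))) ?sub_count //.
  by move=> c /andP[].
move=> c cPhi /=; case cx: (satisfies c x); rewrite ?andbF // andbT.
rewrite (satisfies_agree_on _ yA) // => i ic.
by rewrite /sat_scopes (big_rem c) //= cx !inE ic.
Qed.

Definition exp_mechanism (R : realType) (eps : R) n (Phi : instance n) :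
  {ffun assignment n -> R} := gibbs eps (fun x => (Defs.val Phi x)%:R).

Lemma exp_mechanism_dp (R : realType) (k n : nat) (eps : R) :
  0 <= eps -> differentially_private k eps 0 (@exp_mechanism R eps n).
Proof.
move=> eps_ge0 Phi Phi' _ _ [c Phi_c] A.
rewrite addr0 /prob mulr_sumr; apply: ler_sum => x _.
pose score Psi (y : assignment n) : R := (Defs.val Psi y)%:R.
have score_le Psi y : score Psi y <= score (c +` Psi)%mset y.
  by rewrite /score val_msetD1 ler_nat leq_addl.
have score_le1 Psi y : score (c +` Psi)%mset y <= score Psi y + 1.
  by rewrite /score val_msetD1 natrD addrC lerD2l lern1 leq_b1.
rewrite /exp_mechanism; case: Phi_c => ->.
- exact (gibbs_le_raised eps_ge0 x (score_le Phi) (score_le1 Phi) x).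
- exact (gibbs_raised_le eps_ge0 x (score_le Phi') (score_le1 Phi') x).
Qed.

Lemma OPT_attained n (Phi : instance n) : {x : assignment n | OPT Phi = Defs.val Phi x}.
Proof.
have nonempty : (0 < #|{: assignment n}|)%N by rewrite card_ffun card_bool expn_gt0.
exact: bigop.eq_bigmax (fun x : assignment n => Defs.val Phi x) nonempty.
Qed.

Lemma exp_mechanism_utility (R : realType) (k n : nat) (eps : R) (Phi : instance n) :
  0 < eps -> arity_le k Phi ->
  (1 - k%:R / eps) * (OPT Phi)%:R <= expected_val Phi (exp_mechanism eps Phi).
Proof.
move=> eps_gt0 arity_Phi.
have [xs OPT_xs] := OPT_attained Phi.
set S := sat_scopes Phi xs; set A := agree_on S xs.
set O := (OPT Phi)%:R : R; set E := expected_val Phi (exp_mechanism eps Phi).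
have xsA : xs \in A by rewrite inE; apply/forallP => i; apply/implyP.
have A_gt0 : (0 : R) < #|A|%:R by rewrite ltr0n; apply/card_gt0P; exists xs.
have gap : expR (eps * (O - E)) <= expR #|S|%:R.
  apply: le_trans (gibbs_expected_gap (ltW eps_gt0) xsA _) _.
    by move=> y yA; rewrite /O OPT_xs ler_nat val_le_agree_on_sat_scopes.
  rewrite ler_pdivrMr //; apply: le_trans (_ : _ <= (2 ^ #|S| * #|A|)%:R) _.
    by rewrite ler_nat -[2%N]card_bool card_ffun_le_agree_on.
  by rewrite natrM ler_pM2r // natr_exp2_le_expR.
have gap_le : eps * (O - E) <= k%:R * O.
  rewrite ler_expR in gap; apply: le_trans gap _.
  by rewrite /O -natrM ler_nat OPT_xs card_sat_scopes.
have : O - E <= k%:R / eps * O by rewrite mulrAC ler_pdivlMr // mulrC.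
rewrite mulrBl mul1r; lra.
Qed.

Theorem corollary1p1 (R : realType) (k : nat) (hk : (0 < k)%N) :
  exists C : R, 0 < C /\
  forall eps : R, 0 < eps ->
  exists M : forall n : nat, instance n -> {ffun assignment n -> R},
    forall n : nat,
      (forall Phi : instance n, is_distribution (M n Phi)) /\
      differentially_private k eps 0 (M n) /\
      (forall Phi : instance n, arity_le k Phi ->
         (1 - C / eps) * (OPT Phi)%:R <= expected_val Phi (M n Phi)).
Proof.
exists k%:R; split; first by rewrite ltr0n.
move=> eps eps_gt0; exists (fun n Phi => exp_mechanism eps Phi) => n; split; [|split].
- by move=> Phi; apply: (gibbs_distribution eps [ffun=> true]).
- exact: exp_mechanism_dp (ltW eps_gt0).
- by move=> Phi; apply: exp_mechanism_utility.
Qed.
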